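(* Let $Q$ be a finite Moufang loop and let $d=2^a3^b>1$ with $a,b\ge 0$ integers. Then $Q$ is uniquely $d$-divisible if and only if $|Q|$ is coprime to $d$.
   Context: A loop is a magma with identity in which all left and right translations are bijections; it is Moufang if it satisfies $xy\cdot zx=(x\cdot yz)x$ (Moufang loops are power associative). A power associative loop is uniquely $d$-divisible if the map $x\mapsto x^d$ is a bijection. *)

From mathcomp Require Import all_boot.
Set Implicit Arguments. Unset Strict Implicit. Unset Printing Implicit Defensive.

Definition is_loop (T : Type) (mul : T -> T -> T) (e : T) : Prop :=
  [/\ (forall x, mul e x = x), (forall x, mul x e = x),
      (forall a, bijective (mul a)) & (forall a, bijective (fun x => mul x a))].

Definition moufang_identity (T : Type) (mul : T -> T -> T) : Prop :=
  forall x y z, mul (mul x y) (mul z x) = mul (mul x (mul y z)) x.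

(* Powers x^n = x (x (... (x e))) ; well defined in power-associative loops. *)
Definition lpow (T : Type) (mul : T -> T -> T) (e : T) (x : T) (n : nat) : T :=
  iter n (mul x) e.

Definition uniquely_divisible (T : Type) (mul : T -> T -> T) (e : T) (d : nat) : Prop :=
  bijective (fun x => lpow mul e x d).

From mathcomp Require Import all_boot all_fingroup all_solvable.
Set Implicit Arguments. Unset Strict Implicit. Unset Printing Implicit Defensive.

(* If d is coprime to |Q|, then x^|Q| = 1 (the right translation by x
   generates a permutation group acting freely on Q, so its order divides |Q|)
   and a Bezout relation u d = 1 + v |Q| makes x |-> x^u an inverse of
   x |-> x^d; power associativity of Moufang loops makes this computation
   legitimate.  Conversely, if p in {2, 3} divides both |Q| and d, an element
   of order p exists: the elements of order dividing p are the fixed points of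
   an action of Z/p (x |-> x^-1 on Q for p = 2, (x, y) |-> (y, (xy)^-1) on Q^2
   for p = 3), and the number of fixed points is congruent to |Q| or |Q|^2
   modulo p, hence is a positive multiple of p.  Such an element and 1 have
   the same d-th power. *)

Section FixedPoints.
Variables (S : finType) (f : S -> S) (p : nat).
Hypotheses (p_pr : prime p) (f_period : forall z, iter p f z = z).

Lemma card_fixpoints_mod : #|S| = #|[set z | f z == z]| %[mod p].
Proof.
have f_inj : injective f.
  apply: (@can_inj _ _ f (iter p.-1 f)) => z.
  by rewrite -iterSr prednK ?prime_gt0 ?f_period.
pose s := perm f_inj.
have sE n z : (s ^+ n)%g z = iter n f z.
  by rewrite permX; apply: eq_iter => w; rewrite permE.
have s_pgroup : (p.-group <[s]>)%g.
  apply: pnat_dvd (pnat_id p_pr); rewrite -orderE order_dvdn.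
  by apply/eqP/permP => z; rewrite sE f_period perm1.
have s_acts : [acts <[s]>%g, on [set: S] | 'P] by apply/actsP => t _ z; rewrite !inE.
rewrite -cardsT (pgroup_fix_mod s_pgroup s_acts) afix_cycle.
congr (_ %% _); apply: eq_card => z.
by rewrite !inE sub1set inE /= apermE permE.
Qed.

Lemma exists_other_fixpoint z0 :
  p %| #|S| -> f z0 = z0 -> exists2 z, z != z0 & f z = z.
Proof.
move=> p_dvd_S fz0.
have p_dvd_fix : p %| #|[set z | f z == z]|.
  by rewrite /dvdn -card_fixpoints_mod.
have : 1 < #|[set z | f z == z]|.
  apply: leq_trans (prime_gt1 p_pr) (dvdn_leq _ p_dvd_fix).
  by apply/card_gt0P; exists z0; rewrite inE fz0.
case/card_gt1P => x [y []]; rewrite !inE => /eqP fx /eqP fy x_neq_y.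
have [x_z0 | x_neq_z0] := eqVneq x z0; last by exists x.
by exists y; rewrite // -x_z0 eq_sym.
Qed.

End FixedPoints.

Lemma order_dvdn_card_free (S : finType) (s : {perm S}) :
  (forall n z, (s ^+ n)%g z = z -> (s ^+ n)%g = 1%g) -> (#[s] %| #|S|)%g.
Proof.
move=> s_free.
have stab_triv z : 'C_(<[s]>)[z | 'P]%g = 1%g.
  apply/trivgP/subsetP => t /setIP [/cycleP [n ->] /astab1P snz].
  by rewrite inE (s_free n z).
have card_orbit z : #|orbit 'P <[s]>%g z| = #[s]%g.
  by have := card_orbit_stab 'P <[s]>%g z; rewrite stab_triv cards1 muln1.
have s_acts : [acts <[s]>%g, on [set: S] | 'P] by apply/actsP => t _ z; rewrite !inE.
rewrite -cardsT (card_uniform_partition (n := #[s]%g) _ (orbit_partition s_acts)).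
  exact: dvdn_mull.
by move=> _ /imsetP [z _ ->].
Qed.

Section MoufangLoop.
Variables (T : finType) (mul : T -> T -> T) (e : T).
Hypotheses (loopT : is_loop mul e) (moufangT : moufang_identity mul).

Local Notation pow := (lpow mul e).
Local Notation rmul x := (fun z => mul z x).

Lemma mul1x x : mul e x = x. Proof. by case: loopT. Qed.
Lemma mulx1 x : mul x e = x. Proof. by case: loopT. Qed.

Lemma mul_injl a : injective (mul a).
Proof. by case: loopT => _ _ /(_ a) /bij_inj. Qed.

Lemma mul_injr a : injective (rmul a).
Proof. by case: loopT => _ _ _ /(_ a) /bij_inj. Qed.

Lemma flexible x y : mul x (mul y x) = mul (mul x y) x.
Proof. by have := moufangT x e y; rewrite mulx1 !mul1x. Qed.

Definition loop_inv x := odflt e [pick y | mul x y == e].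

Lemma mulxV x : mul x (loop_inv x) = e.
Proof.
rewrite /loop_inv; case: pickP => [y /eqP // | no_inv].
by case: loopT => _ _ /(_ x) [g _ gK]; have := no_inv (g e); rewrite gK eqxx.
Qed.

Lemma inv_unique x y : mul x y = e -> loop_inv x = y.
Proof. by move=> xy1; apply: (@mul_injl x); rewrite mulxV xy1. Qed.

Lemma mulKVx x y : mul x (mul (loop_inv x) y) = y.
Proof. by have := moufangT x (loop_inv x) y; rewrite mulxV mul1x => /mul_injr. Qed.

Lemma mulVx x : mul (loop_inv x) x = e.
Proof. by apply: (@mul_injl x); rewrite mulKVx mulx1. Qed.

Lemma invK x : loop_inv (loop_inv x) = x.
Proof. exact/inv_unique/mulVx. Qed.

Lemma mulKx x y : mul (loop_inv x) (mul x y) = y.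
Proof. by rewrite -{2}(invK x) mulKVx. Qed.

Lemma mulxKV x y : mul (mul y (loop_inv x)) x = y.
Proof. by have := moufangT x y (loop_inv x); rewrite mulVx mulx1 -flexible => /mul_injl. Qed.

Lemma mulxK x y : mul (mul y x) (loop_inv x) = y.
Proof. by rewrite -{1}(invK x) mulxKV. Qed.

Lemma mul_eq1_rot x y z : mul (mul x y) z = e -> mul (mul y z) x = e.
Proof.
move=> xyz1.
have xy_inv : mul x y = loop_inv z by rewrite -(mulxK z (mul x y)) xyz1 mul1x.
have -> : y = mul (loop_inv x) (loop_inv z) by rewrite -xy_inv mulKx.
by rewrite mulxKV mulVx.
Qed.

Lemma powS x n : pow x n.+1 = mul x (pow x n).
Proof. by []. Qed.

Lemma powCx x n : mul (pow x n) x = mul x (pow x n).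
Proof. by elim: n => [|n IHn]; rewrite ?mul1x ?mulx1 // powS -flexible IHn. Qed.

Lemma mul_iter_rmul x y n : mul x (iter n (rmul x) y) = iter n (rmul x) (mul x y).
Proof. by elim: n => [|n IHn] //=; rewrite -IHn flexible. Qed.

(* Moufang: y x^(n+1) = (x (x^-1 y)) (x^n x) = (x ((x^-1 y) x^n)) x. *)
Lemma mul_pow x n y : mul y (pow x n) = iter n (rmul x) y.
Proof.
elim: n y => [|n IHn] y; first by rewrite mulx1.
rewrite -(mulKVx x y) powS -powCx moufangT IHn mul_iter_rmul.
by rewrite iterS.
Qed.

Lemma pow_iter_rmul x n : pow x n = iter n (rmul x) e.
Proof. by rewrite -mul_pow mul1x. Qed.

Lemma powD x m n : pow x (m + n) = mul (pow x m) (pow x n).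
Proof. by rewrite mul_pow !pow_iter_rmul addnC iterD. Qed.

Lemma powM x m n : pow (pow x m) n = pow x (m * n).
Proof. by elim: n => [|n IHn]; rewrite ?muln0 // powS IHn mulnS powD. Qed.

Lemma pow1 n : pow e n = e.
Proof. by elim: n => [|n IHn] //; rewrite powS IHn mul1x. Qed.

Lemma pow_card x : pow x #|T| = e.
Proof.
pose s := perm (@mul_injr x).
have sE n z : (s ^+ n)%g z = mul z (pow x n).
  by rewrite permX mul_pow; apply: eq_iter => w; rewrite permE.
have s_free n z : (s ^+ n)%g z = z -> (s ^+ n)%g = 1%g.
  rewrite sE -{2}(mulx1 z) => /mul_injl xn1.
  by apply/permP => w; rewrite sE xn1 mulx1 perm1.
have /eqP s_card : (s ^+ #|T| == 1)%g by rewrite -order_dvdn order_dvdn_card_free.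
by have := congr1 (fun t : {perm T} => t e) s_card; rewrite sE perm1 mul1x.
Qed.

Lemma pow_bij_coprime d : 0 < d -> coprime #|T| d -> bijective (fun x => pow x d).
Proof.
move=> d_gt0 co_Td; have [u v bezout _] := egcdnP #|T| d_gt0.
rewrite gcdnC (eqP co_Td) in bezout.
have powK : cancel (fun x => pow x d) (fun y => pow y u).
  move=> x /=; rewrite powM mulnC bezout powD mulnC -powM pow_card pow1 mul1x.
  exact: mulx1.
exact/injF_bij/(can_inj powK).
Qed.

Lemma exists_order2 : 2 %| #|T| -> exists2 x, x != e & pow x 2 = e.
Proof.
move=> two_dvd_T.
have inv1 : loop_inv e = e by apply: inv_unique; rewrite mul1x.
have [x x_neq_e invx] := exists_other_fixpoint (erefl : prime 2) invK two_dvd_T inv1.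
by exists x; rewrite // powS /= mulx1 -{2}invx mulxV.
Qed.

Lemma exists_order3 : 3 %| #|T| -> exists2 x, x != e & pow x 3 = e.
Proof.
move=> three_dvd_T.
pose f (w : T * T) := (w.2, loop_inv (mul w.1 w.2)).
have f_period w : iter 3 f w = w.
  case: w => x y; rewrite /f /=.
  have xy_rot := mul_eq1_rot (mulxV (mul x y)).
  by rewrite (inv_unique xy_rot) (inv_unique (mul_eq1_rot xy_rot)).
have f1 : f (e, e) = (e, e) by rewrite /f /= mul1x (inv_unique (mul1x e)).
have three_dvd_T2 : 3 %| #|{: T * T}| by rewrite card_prod dvdn_mulr.
have [[x y] xy_neq_1 [y_x invxy]] :=
  exists_other_fixpoint (erefl : prime 3) f_period three_dvd_T2 f1.
subst y; exists x; first by apply: contraNneq xy_neq_1 => ->.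
by rewrite !powS /= mulx1 flexible -{3}invxy mulxV.
Qed.

Lemma pow_not_inj p d : p = 2 \/ p = 3 -> p %| #|T| -> p %| d ->
  ~ injective (fun x => pow x d).
Proof.
move=> p23 p_dvd_T /dvdnP [k ->] pow_inj.
have [x x_neq_e xp1] : exists2 x, x != e & pow x p = e.
  by case: p23 p_dvd_T => ->; [apply: exists_order2 | apply: exists_order3].
have : pow x (k * p) = pow e (k * p) by rewrite mulnC -powM xp1 !pow1.
by move/pow_inj/eqP; rewrite (negbTE x_neq_e).
Qed.

End MoufangLoop.

Lemma prime_dvd_2a3b p a b : prime p -> p %| 2 ^ a * 3 ^ b -> p = 2 \/ p = 3.
Proof.
move=> p_pr; rewrite Euclid_dvdM // !Euclid_dvdX // => /orP [] /andP [p_dvd _].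
  by left; apply/eqP; rewrite -dvdn_prime2.
by right; apply/eqP; rewrite -dvdn_prime2.
Qed.

Theorem proposition1p13 (T : finType) (mul : T -> T -> T) (e : T) (a b : nat) :
  is_loop mul e -> moufang_identity mul ->
  1 < 2 ^ a * 3 ^ b ->
  (uniquely_divisible mul e (2 ^ a * 3 ^ b) <-> coprime #|T| (2 ^ a * 3 ^ b)).
Proof.
move=> loopT moufangT; set d := 2 ^ a * 3 ^ b => d_gt1.
split; last exact: pow_bij_coprime (ltnW d_gt1).
move=> /bij_inj pow_inj; apply: contraT => not_coprime.
have gcd_gt1 : 1 < gcdn #|T| d.
  by rewrite ltn_neqAle eq_sym not_coprime gcdn_gt0 (ltnW d_gt1) orbT.
have p_dvd_gcd := pdiv_dvd (gcdn #|T| d).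
have p_dvd_d : pdiv (gcdn #|T| d) %| d := dvdn_trans p_dvd_gcd (dvdn_gcdr _ _).
have p_dvd_T : pdiv (gcdn #|T| d) %| #|T| := dvdn_trans p_dvd_gcd (dvdn_gcdl _ _).
have p23 := prime_dvd_2a3b (pdiv_prime gcd_gt1) p_dvd_d.
by case: (pow_not_inj loopT moufangT p23 p_dvd_T p_dvd_d).
Qed.
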